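(* Let $a<b$ with $[a,b]\subset[0,\infty)$, let $f,g:[a,b]\to\mathbb{R}$ be integrable with $0\le g(t)\le1$ for all $t\in[a,b]$ and such that $\int_a^b g(t)f'(t)\,dt$ exists. Suppose $f$ is absolutely continuous on $[a,b]$ and $|f'|$ is convex on $[a,b]$. Let $\lambda:=\int_a^b g(t)\,dt$. Then $$\left|\int_a^{a+\lambda} f(t)\,dt-\int_a^b f(t)g(t)\,dt\right|\le\frac16\lambda^2|f'(a)|+\frac13\left[\lambda^2+(b-a-\lambda)^2\right]|f'(a+\lambda)|+\frac16(b-a-\lambda)^2|f'(b)|,$$ and $$\left|\int_a^b f(t)g(t)\,dt-\int_{b-\lambda}^b f(t)\,dt\right|\le\frac16\lambda^2|f'(b)|+\frac13\left[\lambda^2+(b-a-\lambda)^2\right]|f'(b-\lambda)|+\frac16(b-a-\lambda)^2|f'(a)|.$$ *)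

From HB Require Import structures.
From mathcomp Require Import all_boot all_order all_algebra.
From mathcomp Require Import all_classical all_reals all_analysis.
Set Implicit Arguments. Unset Strict Implicit. Unset Printing Implicit Defensive.
Import Order.TTheory GRing.Theory Num.Theory.
Import numFieldNormedType.Exports.
Local Open Scope classical_set_scope.
Local Open Scope ring_scope.

Definition abs_continuous_on (R : realType) (a b : R) (f : R -> R) : Prop :=
  forall eps : R, 0 < eps -> exists2 delta : R, 0 < delta &
    forall (n : nat) (u v : nat -> R),
      (forall i, (i < n)%N -> a <= u i /\ u i <= v i /\ v i <= b) ->
      (forall i j, (i < n)%N -> (j < n)%N -> i <> j -> v i <= u j \/ v j <= u i) ->
      \sum_(i < n) (v i - u i) < delta ->
      \sum_(i < n) `|f (v i) - f (u i)| < eps.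

Definition convex_on (R : realType) (a b : R) (h : R -> R) : Prop :=
  forall x y t : R, a <= x <= b -> a <= y <= b -> 0 <= t <= 1 ->
    h (t * x + (1 - t) * y) <= t * h x + (1 - t) * h y.

(* Put lambda := \int_a^b g and c := a + lambda.  Then
   \int_a^c f - \int_a^b f g = \int_a^c f (1 - g) - \int_c^b f g, where the
   weights 1 - g on [a, c] and g on [c, b] take values in [0, 1] and have the
   same mass; subtracting f(c) times that mass bounds the difference by
   \int_a^c |f - f(c)| + \int_c^b |f - f(c)|.  By convexity |f'| lies below its
   chord on [a, c] and on [c, b], so |f(t) - f(c)| is at most the integral of
   that chord between t and c, a quadratic in t whose integral is the
   right-hand side.  The second inequality is the same argument with
   c := b - lambda.
   Integrating the a.e. inequality |f'| <= phi for an absolutely continuous f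
   is done by real induction: the null set where f' may fail to exist is
   covered by an open set of small measure, on which the growth of f is
   controlled by absolute continuity. *)

From HB Require Import structures.
From mathcomp Require Import all_boot all_order all_algebra.
From mathcomp Require Import all_classical all_reals all_analysis.
From mathcomp Require Import ring lra measurable_realfun.

Set Implicit Arguments.
Unset Strict Implicit.

Import Order.TTheory GRing.Theory Num.Theory.
Import numFieldNormedType.Exports.
Local Open Scope classical_set_scope.
Local Open Scope ring_scope.
Section WeightedIntegrals.
Context d (T : measurableType d) (R : realType) (mu : {measure set T -> \bar R}).
Implicit Types (D : set T) (f w : T -> R).

Lemma integrableB_EFin D f1 f2 : measurable D ->
  mu.-integrable D (EFin \o f1) -> mu.-integrable D (EFin \o f2) ->
  mu.-integrable D (EFin \o (fun x => f1 x - f2 x)).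
Proof.
by move=> mD i1 i2; apply: eq_integrable (integrableB mD i1 i2).
Qed.

Lemma integrableMr_le1 D f w : measurable D ->
  mu.-integrable D (EFin \o f) -> mu.-integrable D (EFin \o w) ->
  (forall x, D x -> `|w x| <= 1) ->
  mu.-integrable D (EFin \o (fun x => f x * w x)).
Proof.
move=> mD fi wi w1.
have mw : measurable_fun D w by apply/measurable_EFinP; exact: measurable_int wi.
have bw : [bounded w x | x in D].
  by exists 1; split => // M M1 x Dx; apply: le_trans (w1 x Dx) (ltW M1).
by apply: eq_integrable (integrableMl mD fi mw bw) => //= x _; rewrite EFinM.
Qed.

Lemma le_Rintegral_mulr_le1 D f w : measurable D ->
  mu.-integrable D (EFin \o f) -> mu.-integrable D (EFin \o w) ->
  (forall x, D x -> `|w x| <= 1) ->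
  `|\int[mu]_(x in D) (f x * w x)| <= \int[mu]_(x in D) `|f x|.
Proof.
move=> mD fi wi w1.
have fwi : mu.-integrable D (EFin \o (fun x => f x * w x)).
  exact: integrableMr_le1.
apply: le_trans (le_normr_Rintegral mD fwi) _.
apply: le_Rintegral => //; [exact: (integrable_norm fwi)|exact: (integrable_norm fi)|].
by move=> x Dx; rewrite normrM ler_piMr ?w1.
Qed.

(* Steffensen-type comparison: two weights of equal mass bounded by 1 see the
   same multiple of any constant [k], so only the oscillation [F - k] counts. *)
Lemma Rintegral_weights_diff_le D1 D2 (F w1 w2 : T -> R) (k : R) :
  measurable D1 -> measurable D2 ->
  mu.-integrable D1 (EFin \o (fun x => F x - k)) ->
  mu.-integrable D2 (EFin \o (fun x => F x - k)) ->
  mu.-integrable D1 (EFin \o w1) -> mu.-integrable D2 (EFin \o w2) ->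
  (forall x, D1 x -> `|w1 x| <= 1) -> (forall x, D2 x -> `|w2 x| <= 1) ->
  \int[mu]_(x in D1) w1 x = \int[mu]_(x in D2) w2 x ->
  `|\int[mu]_(x in D1) (F x * w1 x) - \int[mu]_(x in D2) (F x * w2 x)|
    <= \int[mu]_(x in D1) `|F x - k| + \int[mu]_(x in D2) `|F x - k|.
Proof.
move=> mD1 mD2 Fi1 Fi2 wi1 wi2 w11 w21 ew.
have shift D w : measurable D -> mu.-integrable D (EFin \o (fun x => F x - k)) ->
    mu.-integrable D (EFin \o w) -> (forall x, D x -> `|w x| <= 1) ->
    \int[mu]_(x in D) (F x * w x)
    = \int[mu]_(x in D) ((F x - k) * w x) + k * \int[mu]_(x in D) w x.
  move=> mD Fi wi wle1; rewrite -RintegralZl // -RintegralD //.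
    by apply: eq_Rintegral => x _; ring.
  + exact: integrableMr_le1.
  + by apply: eq_integrable (integrableZl mD k wi) => //= x _; rewrite EFinM.
rewrite (shift D1) // (shift D2) // ew.
rewrite opprD addrACA subrr addr0.
by apply: le_trans (ler_normB _ _) _; apply: lerD; exact: le_Rintegral_mulr_le1.
Qed.

End WeightedIntegrals.

Section IntervalIntegrals.
Context {R : realType}.
Notation mu := (@lebesgue_measure R).
Implicit Types (a b c p q : R) (f : R -> R).

Lemma integrable_subitv a b p q f : a <= p -> q <= b ->
  mu.-integrable `[a, b] (EFin \o f) -> mu.-integrable `[p, q] (EFin \o f).
Proof.
move=> ap qb; apply: integrableS => // x /=; rewrite !in_itv /=.
by case/andP => px xq; rewrite (le_trans ap px) (le_trans xq qb).
Qed.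

Lemma continuous_integrable_itv p q f : continuous f ->
  mu.-integrable `[p, q] (EFin \o f).
Proof.
move=> cf; apply: continuous_compact_integrable; first exact: segment_compact.
exact: continuous_subspaceT.
Qed.

Lemma Rintegral_cst_itv p q (k : R) : p <= q -> \int[mu]_(t in `[p, q]) k = k * (q - p).
Proof.
move=> pq; rewrite Rintegral_cst; last exact: measurable_itv.
congr (_ * _); apply: eq_trans (congr1 fine (lebesgue_measure_itv `[p, q]%R)) _.
rewrite /= lte_fin; move: pq; rewrite le_eqVlt => /predU1P[->|->//].
by rewrite ltxx subrr.
Qed.

Lemma Rintegral_itv_split p c q f : p <= c -> c <= q ->
  mu.-integrable `[p, q] (EFin \o f) ->
  \int[mu]_(t in `[p, q]) f t
  = \int[mu]_(t in `[p, c]) f t + \int[mu]_(t in `[c, q]) f t.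
Proof.
move=> pc cq fi; rewrite -(@Rintegral_itv_obnd_cbnd R c (BRight q)).
  have := @Rintegral_itvB R f (BLeft p) (BRight q) c fi.
  by rewrite !bnd_simp => /(_ pc cq) <-; ring.
apply: integrableS fi => // x /=; rewrite !in_itv /= => /andP[cx ->].
by rewrite (le_trans pc (ltW cx)).
Qed.

Lemma continuous_quadratic p q (K0 K1 K2 : R) :
  continuous (fun t => K0 + K1 * (t - p) ^+ 2 + K2 * (q - t) ^+ 2).
Proof.
have -> : (fun t => K0 + K1 * (t - p) ^+ 2 + K2 * (q - t) ^+ 2)
    = horner (K0%:P + K1 *: ('X - p%:P) ^+ 2 + K2 *: (q%:P - 'X) ^+ 2).
  by apply/funext => t; rewrite !hornerE.
exact: continuous_horner.
Qed.

Lemma Rintegral_quadratic p q (K0 K1 K2 : R) : p <= q ->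
  \int[mu]_(t in `[p, q]) (K0 + K1 * (t - p) ^+ 2 + K2 * (q - t) ^+ 2)
  = K0 * (q - p) + (K1 + K2) * (q - p) ^+ 3 / 3.
Proof.
rewrite le_eqVlt => /predU1P[<-|pq].
  by rewrite set_itv1 Rintegral_set1 subrr expr0n /= !mulr0 mul0r addr0.
pose P : {poly R} := K0 *: 'X + (K1 / 3) *: ('X - p%:P) ^+ 3
  - (K2 / 3) *: (q%:P - 'X) ^+ 3.
have P' : (fun t => K0 + K1 * (t - p) ^+ 2 + K2 * (q - t) ^+ 2) = horner P^`().
  apply/funext => t; rewrite derivB derivD !derivZ !deriv_exp derivXsubC derivB.
  by rewrite derivC derivX /= !hornerE /=; field.
rewrite /Rintegral (@continuous_FTC2 R _ (horner P) p q pq).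
- by rewrite /P !hornerE /=; field.
- have : continuous (horner P^`()) by exact: continuous_horner.
  by rewrite -P' => /continuous_subspaceT.
- split; first by move=> x _; exact: ex_derive.
  + exact/cvg_at_right_filter/continuous_horner.
  + exact/cvg_at_left_filter/continuous_horner.
- move=> x _; rewrite derive1E derive_val.
  by have := congr1 (fun F => F x) P' => /= ->.
Qed.

End IntervalIntegrals.

Section AbsoluteContinuity.
Context {R : realType}.
Implicit Types (a b x y : R) (f g : R -> R).

Lemma abs_continuous_on_sub a b x y f : a <= x -> y <= b ->
  abs_continuous_on a b f -> abs_continuous_on x y f.
Proof.
move=> ax yb ac e e0; have [d d0 acd] := ac e e0; exists d => // n u v uv.
apply: acd => i ilt; have [xu [uv' vy]] := uv i ilt.
by split; [exact: le_trans xu|split; [|exact: le_trans yb]].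
Qed.

Lemma abs_continuous_on_dist_lt a b f : abs_continuous_on a b f ->
  forall e, 0 < e -> exists2 d, 0 < d & forall x y,
    a <= x -> x <= y -> y <= b -> y - x < d -> `|f y - f x| < e.
Proof.
move=> ac e e0; have [d d0 acd] := ac e e0; exists d => // x y ax xy yb yxd.
have := acd 1%N (fun=> x) (fun=> y); rewrite !big_ord1; apply => //.
by move=> i j; rewrite !ltnS !leqn0 => /eqP -> /eqP ->.
Qed.

Lemma abs_continuous_onN a b f :
  abs_continuous_on a b f -> abs_continuous_on a b (fun x => - f x).
Proof.
move=> ac e e0; have [d d0 acd] := ac e e0; exists d => // n u v uv dis len.
under eq_bigr do rewrite -opprD normrN.
exact: acd.
Qed.

Lemma abs_continuous_onB a b f g : abs_continuous_on a b f ->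
  abs_continuous_on a b g -> abs_continuous_on a b (fun x => f x - g x).
Proof.
move=> acf acg e e0; have e20 : 0 < e / 2 by rewrite divr_gt0.
have [df df0 Hf] := acf _ e20; have [dg dg0 Hg] := acg _ e20.
exists (Num.min df dg); first by rewrite lt_min df0.
move=> n u v uv dis; rewrite lt_min => /andP[lf lg].
have := Hf n u v uv dis lf; have := Hg n u v uv dis lg.
have : \sum_(i < n) `|f (v i) - g (v i) - (f (u i) - g (u i))|
    <= \sum_(i < n) `|f (v i) - f (u i)| + \sum_(i < n) `|g (v i) - g (u i)|.
  rewrite -big_split /=; apply: ler_sum => i _.
  by rewrite (_ : _ - _ = (f (v i) - f (u i)) - (g (v i) - g (u i))) ?ler_normB //; ring.
lra.
Qed.

Lemma lipschitz_abs_continuous_on a b (L : R) f : 0 <= L ->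
  (forall x y, a <= x -> x <= y -> y <= b -> `|f y - f x| <= L * (y - x)) ->
  abs_continuous_on a b f.
Proof.
move=> L0 lip e e0; have L1 : 0 < L + 1 by lra.
exists (e / (L + 1)); first by rewrite divr_gt0.
move=> n u v uv _; rewrite ltr_pdivlMr // => len.
have : \sum_(i < n) `|f (v i) - f (u i)| <= L * \sum_(i < n) (v i - u i).
  rewrite mulr_sumr; apply: ler_sum => i _.
  by have [? [? ?]] := uv i (ltn_ord i); exact: lip.
have : 0 <= \sum_(i < n) (v i - u i).
  by apply: sumr_ge0 => i _; have [_ [? _]] := uv i (ltn_ord i); lra.
nra.
Qed.

End AbsoluteContinuity.

Section DiniDerivative.
Context {R : realType}.

Definition dini_right_nonpos (h : R -> R) (v s : R) : Prop :=
  forall e, 0 < e -> exists r, [/\ 0 < r, s + r <= v & h (s + r) - h s <= e * r].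

Lemma is_derive_dini_right_nonpos (h : R -> R) (v s d : R) :
  is_derive s 1 h d -> d <= 0 -> s < v -> dini_right_nonpos h v s.
Proof.
move=> /is_derive1_caratheodory[G [hG cG Gs]] d0 sv e e0.
have /cvgrPdist_lt/(_ e e0)/nbhs_ballP[r /= r0 near_s] := cG.
pose r' := Num.min (r / 2) (v - s).
have r'0 : 0 < r' by rewrite lt_min divr_gt0 //= subr_gt0.
have r'r : r' <= r / 2 by rewrite ge_min lexx.
have r'v : r' <= v - s by rewrite ge_min lexx orbT.
exists r'; split => //; first lra.
have : `|G s - G (s + r')| < e.
  by apply: near_s; rewrite -ball_normE /= opprD addrA subrr sub0r normrN gtr0_norm //; lra.
rewrite ltr_norml => /andP[Gr _].
rewrite hG (_ : s + r' - s = r'); last ring.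
by rewrite ler_wpM2r ?(ltW r'0) //; lra.
Qed.

End DiniDerivative.

Section Packings.
Context {R : realType}.
Notation mu := (@lebesgue_measure R).
Implicit Types (u s t : R) (U : set R) (p q : nat -> R).

Definition packing u t U (n : nat) p q : Prop :=
  [/\ forall i, (i < n)%N -> u <= p i /\ p i <= q i /\ q i <= t,
      forall i j, (i < n)%N -> (j < n)%N -> i <> j -> q i <= p j \/ q j <= p i
    & forall i, (i < n)%N -> `]p i, q i] `<=` U].

Lemma packing0 u t U p q : packing u t U 0 p q.
Proof. by []. Qed.

Lemma packing_widen u s t U n p q : s <= t -> packing u s U n p q -> packing u t U n p q.
Proof.
move=> st [inI dis sub]; split => // i ilt.
by have [? [? ?]] := inI i ilt; do !split => //; exact: le_trans st.
Qed.

Lemma packing_snoc u s t U n p q (h : R -> R) : u <= s -> s <= t -> `]s, t] `<=` U ->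
  packing u s U n p q -> exists p' q', packing u t U n.+1 p' q' /\
    \sum_(i < n.+1) `|h (q' i) - h (p' i)|
    = \sum_(i < n) `|h (q i) - h (p i)| + `|h t - h s|.
Proof.
move=> us st sU [inI dis sub].
exists (fun i => if i == n then s else p i), (fun i => if i == n then t else q i).
split; last first.
  rewrite big_ord_recr /= eqxx; congr (_ + _).
  by apply: eq_bigr => i _; rewrite ltn_eqF.
split.
- move=> i; rewrite ltnS leq_eqVlt => /predU1P[->|ilt].
    by rewrite eqxx; split => //; split.
  rewrite ltn_eqF //; have [? [? ?]] := inI i ilt.
  by split => //; split => //; exact: le_trans st.
- move=> i j; rewrite ltnS leq_eqVlt => /predU1P[->|ilt];
    rewrite ltnS leq_eqVlt => /predU1P[->|jlt] ij //; rewrite ?eqxx.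
  + by rewrite ltn_eqF //; right; have [_ [_ ?]] := inI j jlt.
  + by rewrite ltn_eqF //; left; have [_ [_ ?]] := inI i ilt.
  + by rewrite !ltn_eqF //; exact: dis.
- move=> i; rewrite ltnS leq_eqVlt => /predU1P[->|ilt]; first by rewrite eqxx.
  by rewrite ltn_eqF //; exact: sub.
Qed.

Lemma packing_length_le u t U n p q : measurable U -> packing u t U n p q ->
  ((\sum_(i < n) (q i - p i))%:E <= mu U)%E.
Proof.
move=> mU [inI dis sub].
pose F i := `]p i, q i]%classic : set R.
have tF : trivIset `I_n F.
  move=> i j /= ilt jlt [x []]; rewrite /F /= !in_itv /= => /andP[? ?] /andP[? ?].
  apply: contrapT => ij; have [] := dis i j ilt jlt ij; lra.
rewrite -sumEFin (eq_bigr (fun i : 'I_n => mu (F i))); last first.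
  move=> i _; rewrite /F lebesgue_measure_itv /= lte_fin.
  have [_ [+ _]] := inI i (ltn_ord i); rewrite le_eqVlt => /predU1P[->|->//].
  by rewrite ltxx subrr.
have mF i : (i < n)%N -> measurable (F i) by move=> _; exact: measurable_itv.
have mUF : measurable (\big[setU/set0]_(i < n) F i).
  by apply: bigsetU_measurable => i _; exact: mF.
rewrite -measure_semi_additive_ord_I // le_measure ?inE //.
by move=> x; rewrite -bigcup_seq => -[i /= _]; exact: sub (ltn_ord i) x.
Qed.

End Packings.

Section DiniMonotonicity.
Context {R : realType}.
Notation mu := (@lebesgue_measure R).
Variables (u v eps : R) (h : R -> R) (N U : set R).
Hypotheses (uv : u <= v) (hac : abs_continuous_on u v h) (eps_gt0 : 0 < eps).
Hypotheses (oU : open U) (NU : N `<=` U).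
Hypothesis hdini : forall s, u <= s -> s < v -> ~ N s -> dini_right_nonpos h v s.

Definition packed_growth (t : R) : Prop := forall eta, 0 < eta ->
  exists n p q, packing u t U n p q /\
    h t - h u <= eps * (t - u) + \sum_(i < n) `|h (q i) - h (p i)| + eta.

Lemma packed_growth_start : packed_growth u.
Proof.
move=> eta eta0; exists 0%N, (fun=> 0), (fun=> 0); split; first exact: packing0.
by rewrite big_ord0 !subrr mulr0 !add0r ltW.
Qed.

Lemma packed_growth_left_closed s : u <= s -> s <= v ->
  (forall d, 0 < d -> exists t, [/\ u <= t <= s, s - d < t & packed_growth t]) ->
  packed_growth s.
Proof.
move=> us sv adh eta eta0; have eta20 : 0 < eta / 2 by rewrite divr_gt0.
have [d d0 hcont] := abs_continuous_on_dist_lt hac eta20.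
have [t [/andP[ut ts] std growt]] := adh d d0.
have [n [p [q [pack bound]]]] := growt _ eta20.
exists n, p, q; split; first exact: packing_widen pack.
have := hcont t s ut ts sv ltac:(lra); rewrite ltr_norml => /andP[_ hts].
have : eps * (t - u) <= eps * (s - u) by rewrite ler_wpM2l ?(ltW eps_gt0) //; lra.
lra.
Qed.

Lemma packed_growth_step s : u <= s -> s < v -> packed_growth s ->
  exists r, [/\ 0 < r, s + r <= v & packed_growth (s + r)].
Proof.
move=> us sv grows; have [Ns|Ns] := pselect (N s); last first.
  have [r [r0 srv hr]] := hdini us sv Ns eps_gt0.
  exists r; split => // eta eta0; have [n [p [q [pack bound]]]] := grows _ eta0.
  exists n, p, q; split; first by apply: packing_widen pack; lra.
  by rewrite (_ : eps * (s + r - u) = eps * (s - u) + eps * r); [lra|ring].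
have /nbhs_ballP[r /= r0 ballU] := @open_nbhs_nbhs _ _ _ (conj oU (NU Ns)).
pose r' := Num.min (r / 2) (v - s).
have r'0 : 0 < r' by rewrite lt_min divr_gt0 //= subr_gt0.
have r'r : r' <= r / 2 by rewrite ge_min lexx.
have r'v : r' <= v - s by rewrite ge_min lexx orbT.
exists r'; split; [by []|lra|move=> eta eta0].
have [n [p [q [pack bound]]]] := grows _ eta0.
have sU : `]s, s + r'] `<=` U.
  move=> x /=; rewrite in_itv /= => /andP[sx xs]; apply: ballU.
  by rewrite -ball_normE /= ler0_norm; lra.
have ssr : s <= s + r' by lra.
have [p' [q' [pack' sum']]] := packing_snoc h us ssr sU pack.
exists n.+1, p', q'; split; rewrite ?sum' //.
have := ler_norm (h (s + r') - h s).
have : eps * (s - u) <= eps * (s + r' - u) by rewrite ler_wpM2l ?(ltW eps_gt0) //; lra.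
lra.
Qed.

Lemma packed_growth_end : packed_growth v.
Proof.
pose A := [set t | u <= t <= v /\ packed_growth t].
have A0 : A !=set0 by exists u; split; [rewrite lexx uv|exact: packed_growth_start].
have hsA : has_sup A by split => //; exists v => t [/andP[_ ?] _].
have us : u <= sup A.
  by apply: sup_upper_bound => //; split; [rewrite lexx uv|exact: packed_growth_start].
have sv : sup A <= v by apply: ge_sup => // t [/andP[_ ?] _].
have growsup : packed_growth (sup A).
  apply: packed_growth_left_closed => // d d0.
  have [t [tuv growt] st] := sup_adherent d0 hsA.
  by exists t; split => //; rewrite (andP tuv).1 sup_upper_bound.
suff <- : sup A = v by [].
apply/eqP; rewrite eq_le sv /= leNgt; apply/negP => ltsv.
have [r [r0 srv growr]] := packed_growth_step us ltsv growsup.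
have : sup A + r <= sup A.
  by apply: sup_upper_bound => //; split => //; rewrite srv andbT; lra.
lra.
Qed.

End DiniMonotonicity.

Lemma le_of_dini_right_nonpos_ae {R : realType} (u v : R) (h : R -> R) (N : set R) :
  u <= v -> abs_continuous_on u v h ->
  measurable N -> @lebesgue_measure R N = 0 ->
  (forall s, u <= s -> s < v -> ~ N s -> dini_right_nonpos h v s) ->
  h v <= h u.
Proof.
move=> uv hac mN N0 hdini.
suff growth eps : 0 < eps -> h v - h u <= eps * (v - u + 2).
  apply/ler_addgt0Pr => e e0; have vu2 : 0 < v - u + 2 by lra.
  have := growth _ (divr_gt0 e0 vu2); rewrite mulrAC -mulrA divff ?mulr1; lra.
move=> eps0; have [d d0 acd] := hac eps eps0.
have [U [oU NU UNd]] : exists U : set R,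
    [/\ open U, N `<=` U & (@lebesgue_measure R (U `\` N) < d%:E)%E].
  by apply: lebesgue_regularity_outer => //; move: N0 => /= ->; exact: ltry.
have mU : measurable U := open_measurable oU.
have muU : (@lebesgue_measure R U < d%:E)%E.
  rewrite -(setDUK NU) measureU //; last by rewrite setDIK.
    by rewrite (_ : (_ N) = 0)%E ?add0e.
  exact: measurableD.
have [n [p [q [pack bound]]]] :=
  packed_growth_end uv hac eps0 oU NU hdini eps0.
have len : \sum_(i < n) (q i - p i) < d.
  by rewrite -lte_fin; apply: le_lt_trans (packing_length_le mU pack) muU.
have [inI dis _] := pack; have := acd n p q inI dis len.
by rewrite (_ : eps * (v - u + 2) = eps * (v - u) + eps + eps); [lra|ring].
Qed.

Section Comparison.
Context {R : realType}.
Notation mu := (@lebesgue_measure R).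

Lemma abs_continuous_growth_le (x y L : R) (f df Phi phi : R -> R) (N : set R) :
  x <= y -> 0 <= L -> abs_continuous_on x y f -> measurable N -> mu N = 0 ->
  (forall s, x <= s <= y -> ~ N s -> is_derive s 1 f (df s)) ->
  (forall s : R, is_derive s 1 Phi (phi s)) ->
  (forall s t, x <= s -> s <= t -> t <= y -> `|Phi t - Phi s| <= L * (t - s)) ->
  (forall s, x <= s <= y -> ~ N s -> df s <= phi s) ->
  f y - f x <= Phi y - Phi x.
Proof.
move=> xy L0 fac mN N0 fdf Phi_phi Phi_lip dfphi.
suff : f y - Phi y <= f x - Phi x by lra.
apply: (le_of_dini_right_nonpos_ae (h := fun t => f t - Phi t) xy _ mN N0).
  exact: abs_continuous_onB fac (lipschitz_abs_continuous_on L0 Phi_lip).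
move=> s xs sy Ns; have sxy : x <= s <= y by rewrite xs ltW.
apply: (is_derive_dini_right_nonpos (d := df s - phi s)) => //.
  exact: is_deriveB (fdf s sxy Ns) (Phi_phi s).
by rewrite subr_le0 dfphi.
Qed.

Lemma abs_continuous_dist_le (x y L : R) (f df Phi phi : R -> R) (N : set R) :
  x <= y -> 0 <= L -> abs_continuous_on x y f -> measurable N -> mu N = 0 ->
  (forall s, x <= s <= y -> ~ N s -> is_derive s 1 f (df s)) ->
  (forall s : R, is_derive s 1 Phi (phi s)) ->
  (forall s t, x <= s -> s <= t -> t <= y -> `|Phi t - Phi s| <= L * (t - s)) ->
  (forall s, x <= s <= y -> ~ N s -> `|df s| <= phi s) ->
  `|f y - f x| <= Phi y - Phi x.
Proof.
move=> xy L0 fac mN N0 fdf Phi_phi Phi_lip dfphi; rewrite ler_norml; apply/andP; split.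
- have := abs_continuous_growth_le (df := fun s => - df s) xy L0
    (abs_continuous_onN fac) mN N0 _ Phi_phi Phi_lip.
  have fdfN s : x <= s <= y -> ~ N s -> is_derive s 1 (fun t => - f t) (- df s).
    by move=> sxy Ns; exact: is_deriveN (fdf s sxy Ns).
  have dfphiN s : x <= s <= y -> ~ N s -> - df s <= phi s.
    by move=> sxy Ns; apply: le_trans (dfphi s sxy Ns); rewrite -normrN ler_norm.
  move=> /(_ fdfN dfphiN); lra.
- apply: abs_continuous_growth_le fdf Phi_phi Phi_lip _ => // s sxy Ns.
  exact: le_trans (ler_norm _) (dfphi s sxy Ns).
Qed.

End Comparison.

Section ChordsAndQuadratics.
Context {R : realType}.

Lemma convex_on_le_secant (a b p q s : R) (h : R -> R) : convex_on a b h ->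
  a <= p -> p < q -> q <= b -> p <= s -> s <= q ->
  h s <= ((q - s) * h p + (s - p) * h q) / (q - p).
Proof.
move=> cvx ap pq qb ps sq; have qp0 : q - p != 0 by rewrite subr_eq0 gt_eqF.
pose t := (q - s) / (q - p).
have t01 : 0 <= t <= 1.
  rewrite /t ler_pdivrMr ?subr_gt0 // mul1r divr_ge0 ?subr_ge0 ?(ltW pq) //=; lra.
have sE : t * p + (1 - t) * q = s by rewrite /t; field.
have hE : t * h p + (1 - t) * h q = ((q - s) * h p + (s - p) * h q) / (q - p).
  by rewrite /t; field.
by have := cvx p q t ltac:(apply/andP; split; lra) ltac:(apply/andP; split; lra) t01;
  rewrite sE hE.
Qed.

Lemma is_derive_sqr_comb (al be p q s : R) :
  is_derive s 1 (fun t => al * (t - p) ^+ 2 - be * (q - t) ^+ 2)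
    (2 * al * (s - p) + 2 * be * (q - s)).
Proof.
have -> : (fun t => al * (t - p) ^+ 2 - be * (q - t) ^+ 2)
    = horner (al *: ('X - p%:P) ^+ 2 - be *: (q%:P - 'X) ^+ 2).
  by apply/funext => t; rewrite !hornerE.
apply: is_derive_eq.
rewrite derivB !derivZ !deriv_exp derivXsubC derivB derivC derivX /= !hornerE /=.
ring.
Qed.

Lemma sqr_comb_lipschitz (al be p q x y : R) : p <= x -> x <= y -> y <= q ->
  `|(al * (y - p) ^+ 2 - be * (q - y) ^+ 2) - (al * (x - p) ^+ 2 - be * (q - x) ^+ 2)|
    <= 2 * (q - p) * (`|al| + `|be|) * (y - x).
Proof.
move=> px xy yq.
rewrite (_ : _ - _ = (y - x) * (al * (y + x - 2 * p) + be * (2 * q - x - y)));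
  last ring.
rewrite normrM ger0_norm ?subr_ge0 // mulrC ler_wpM2r ?subr_ge0 //.
apply: le_trans (ler_normD _ _) _; rewrite !normrM mulrDr.
by apply: lerD; rewrite mulrC ler_wpM2r // ler_norml; apply/andP; split; lra.
Qed.

End ChordsAndQuadratics.

Section ConvexDerivative.
Context {R : realType}.
Notation mu := (@lebesgue_measure R).
Variables (a b : R) (f df : R -> R) (N : set R).
Hypotheses (fint : mu.-integrable `[a, b] (EFin \o f)) (fac : abs_continuous_on a b f).
Hypotheses (mN : measurable N) (N0 : mu N = 0).
Hypothesis fdf : forall s, a <= s <= b -> ~ N s -> is_derive s 1 f (df s).
Hypothesis cvx : convex_on a b (fun t => `|df t|).

(* Its derivative is the chord of [|df|] over [[p, q]], which dominates [|df|]
   there by convexity. *)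
Definition secant_primitive (p q t : R) : R :=
  `|df q| / (2 * (q - p)) * (t - p) ^+ 2 - `|df p| / (2 * (q - p)) * (q - t) ^+ 2.

Lemma dist_le_secant_primitive p q x y : a <= p -> p < q -> q <= b ->
  p <= x -> x <= y -> y <= q ->
  `|f y - f x| <= secant_primitive p q y - secant_primitive p q x.
Proof.
move=> ap pq qb px xy yq; have qp0 : q - p != 0 by rewrite subr_eq0 gt_eqF.
pose al := `|df q| / (2 * (q - p)); pose be := `|df p| / (2 * (q - p)).
apply: (abs_continuous_dist_le (L := 2 * (q - p) * (`|al| + `|be|)) xy _ _ mN N0 _
  (fun s => is_derive_sqr_comb al be p q s)).
- by rewrite mulr_ge0 ?addr_ge0 // mulr_ge0 // subr_ge0 ltW.
- by apply: abs_continuous_on_sub fac; lra.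
- by move=> s /andP[xs sy]; apply: fdf; apply/andP; split; lra.
- by move=> s t xs st ty; apply: sqr_comb_lipschitz; lra.
- move=> s /andP[xs sy] _.
  apply: le_trans (convex_on_le_secant cvx ap pq qb _ _) _; [lra|lra|].
  by rewrite le_eqVlt; apply/orP; left; apply/eqP; rewrite /al /be; field.
Qed.

Let integrable_subB p q c : a <= p -> q <= b ->
  mu.-integrable `[p, q] (EFin \o (fun t => f t - c)).
Proof.
move=> ap qb; apply: integrableB_EFin; first exact: measurable_itv.
  exact: integrable_subitv fint.
exact/continuous_integrable_itv/cst_continuous.
Qed.

Lemma Rintegral_dist_right_end_le p q : a <= p -> p <= q -> q <= b ->
  \int[mu]_(t in `[p, q]) `|f t - f q| <= (q - p) ^+ 2 * (`|df p| / 6 + `|df q| / 3).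
Proof.
move=> ap; rewrite le_eqVlt => /predU1P[<- _|pq qb].
  by rewrite set_itv1 Rintegral_set1 subrr expr0n mul0r.
have qp0 : q - p != 0 by rewrite subr_eq0 gt_eqF.
pose al := `|df q| / (2 * (q - p)); pose be := `|df p| / (2 * (q - p)).
apply: (@le_trans _ _ (\int[mu]_(t in `[p, q])
    (secant_primitive p q q + (- al) * (t - p) ^+ 2 + be * (q - t) ^+ 2))).
  apply: le_Rintegral; first exact: measurable_itv.
  - exact/integrable_norm/integrable_subB.
  - exact/continuous_integrable_itv/continuous_quadratic.
  move=> t /=; rewrite in_itv /= => /andP[pt tq]; rewrite distrC.
  have := dist_le_secant_primitive ap pq qb pt tq (lexx q).
  rewrite /secant_primitive -/al -/be; lra.
rewrite Rintegral_quadratic ?(ltW pq) // /secant_primitive -/al -/be.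
by rewrite le_eqVlt; apply/orP; left; apply/eqP; rewrite /al /be; field.
Qed.

Lemma Rintegral_dist_left_end_le p q : a <= p -> p <= q -> q <= b ->
  \int[mu]_(t in `[p, q]) `|f t - f p| <= (q - p) ^+ 2 * (`|df p| / 3 + `|df q| / 6).
Proof.
move=> ap; rewrite le_eqVlt => /predU1P[<- _|pq qb].
  by rewrite set_itv1 Rintegral_set1 subrr expr0n mul0r.
have qp0 : q - p != 0 by rewrite subr_eq0 gt_eqF.
pose al := `|df q| / (2 * (q - p)); pose be := `|df p| / (2 * (q - p)).
apply: (@le_trans _ _ (\int[mu]_(t in `[p, q])
    (- secant_primitive p q p + al * (t - p) ^+ 2 + (- be) * (q - t) ^+ 2))).
  apply: le_Rintegral; first exact: measurable_itv.
  - exact/integrable_norm/integrable_subB.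
  - exact/continuous_integrable_itv/continuous_quadratic.
  move=> t /=; rewrite in_itv /= => /andP[pt tq].
  have := dist_le_secant_primitive ap pq qb (lexx p) pt tq.
  rewrite /secant_primitive -/al -/be; lra.
rewrite Rintegral_quadratic ?(ltW pq) // /secant_primitive -/al -/be.
by rewrite le_eqVlt; apply/orP; left; apply/eqP; rewrite /al /be; field.
Qed.

Lemma weighted_split_diff_le c (w1 w2 : R -> R) : a <= c -> c <= b ->
  mu.-integrable `[a, c] (EFin \o w1) -> mu.-integrable `[c, b] (EFin \o w2) ->
  (forall t, a <= t <= c -> `|w1 t| <= 1) -> (forall t, c <= t <= b -> `|w2 t| <= 1) ->
  \int[mu]_(t in `[a, c]) w1 t = \int[mu]_(t in `[c, b]) w2 t ->
  `|\int[mu]_(t in `[a, c]) (f t * w1 t) - \int[mu]_(t in `[c, b]) (f t * w2 t)|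
    <= (c - a) ^+ 2 * (`|df a| / 6 + `|df c| / 3)
       + (b - c) ^+ 2 * (`|df c| / 3 + `|df b| / 6).
Proof.
move=> ac cb w1i w2i w11 w21 ew.
apply: le_trans (Rintegral_weights_diff_le (k := f c) _ _ _ _ w1i w2i _ _ ew) _.
- exact: measurable_itv.
- exact: measurable_itv.
- exact: integrable_subB.
- exact: integrable_subB.
- by move=> t; rewrite /= in_itv /=; exact: w11.
- by move=> t; rewrite /= in_itv /=; exact: w21.
by apply: lerD; [exact: Rintegral_dist_right_end_le|exact: Rintegral_dist_left_end_le].
Qed.

End ConvexDerivative.

Section WeightedMean.
Context {R : realType}.
Notation mu := (@lebesgue_measure R).
Variables (a b : R) (f g df : R -> R) (N : set R).
Hypothesis ab : a <= b.
Hypotheses (fint : mu.-integrable `[a, b] (EFin \o f)) (fac : abs_continuous_on a b f).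
Hypotheses (gint : mu.-integrable `[a, b] (EFin \o g)).
Hypothesis g01 : forall t, a <= t <= b -> 0 <= g t <= 1.
Hypotheses (mN : measurable N) (N0 : mu N = 0).
Hypothesis fdf : forall s, a <= s <= b -> ~ N s -> is_derive s 1 f (df s).
Hypothesis cvx : convex_on a b (fun t => `|df t|).

Let lambda := \int[mu]_(t in `[a, b]) g t.

Let g_bound p q t : a <= p -> q <= b -> p <= t <= q -> 0 <= g t <= 1.
Proof. by move=> ap qb /andP[pt tq]; apply: g01; rewrite (le_trans ap pt) (le_trans tq qb). Qed.

Let integrable_g p q : a <= p -> q <= b -> mu.-integrable `[p, q] (EFin \o g).
Proof. by move=> ap qb; exact: integrable_subitv gint. Qed.

Let integrable_1Bg p q : a <= p -> q <= b ->
  mu.-integrable `[p, q] (EFin \o (fun t => 1 - g t)).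
Proof.
move=> ap qb; apply: integrableB_EFin; first exact: measurable_itv.
  exact/continuous_integrable_itv/cst_continuous.
exact: integrable_g.
Qed.

Let integrable_fg p q : a <= p -> q <= b ->
  mu.-integrable `[p, q] (EFin \o (fun t => f t * g t)).
Proof.
move=> ap qb; apply: integrableMr_le1; first exact: measurable_itv.
- exact: integrable_subitv fint.
- exact: integrable_g.
by move=> t; rewrite /= in_itv /= => ptq; have := g_bound ap qb ptq; case/andP=> *;
  rewrite ger0_norm.
Qed.

Let Rintegral_f1Bg p q : a <= p -> q <= b ->
  \int[mu]_(t in `[p, q]) (f t * (1 - g t))
  = \int[mu]_(t in `[p, q]) f t - \int[mu]_(t in `[p, q]) (f t * g t).
Proof.
move=> ap qb; rewrite -RintegralB //; first by apply: eq_Rintegral => t _; ring.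
  exact: integrable_subitv fint.
exact: integrable_fg.
Qed.

Let lambda_split c : a <= c -> c <= b ->
  lambda = \int[mu]_(t in `[a, c]) g t + \int[mu]_(t in `[c, b]) g t.
Proof. by move=> ac cb; exact: Rintegral_itv_split. Qed.

Let lambda_ge0 : 0 <= lambda.
Proof. by apply: Rintegral_ge0 => t; rewrite /= in_itv /= => /g01 /andP[]. Qed.

Let lambda_le : lambda <= b - a.
Proof.
rewrite -[b - a]mul1r -Rintegral_cst_itv //.
apply: le_Rintegral => //; first exact/continuous_integrable_itv/cst_continuous.
by move=> t; rewrite /= in_itv /= => /g01 /andP[].
Qed.

Let mass_1Bg p q : a <= p -> q <= b -> p <= q ->
  \int[mu]_(t in `[p, q]) (1 - g t) = q - p - \int[mu]_(t in `[p, q]) g t.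
Proof.
move=> ap qb pq; rewrite RintegralB //; first by rewrite Rintegral_cst_itv // mul1r.
  exact/continuous_integrable_itv/cst_continuous.
exact: integrable_g.
Qed.

Lemma Rintegral_head_diff_le :
  `|\int[mu]_(t in `[a, a + lambda]) f t - \int[mu]_(t in `[a, b]) (f t * g t)|
    <= lambda ^+ 2 / 6 * `|df a|
       + (lambda ^+ 2 + (b - a - lambda) ^+ 2) / 3 * `|df (a + lambda)|
       + (b - a - lambda) ^+ 2 / 6 * `|df b|.
Proof.
have l0 := lambda_ge0; have lba := lambda_le.
have ac : a <= a + lambda by lra.
have cb : a + lambda <= b by lra.
rewrite (Rintegral_itv_split ac cb (integrable_fg (lexx a) (lexx b))).
rewrite opprD addrA -Rintegral_f1Bg //.
apply: le_trans (weighted_split_diff_le fint fac mN N0 fdf cvx ac cb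
  (integrable_1Bg (lexx a) cb) (integrable_g ac (lexx b)) _ _ _) _.
- move=> t atc; have /andP[g0 g1] := g_bound (lexx a) cb atc.
  by rewrite ger0_norm; lra.
- by move=> t ctb; have /andP[g0 g1] := g_bound ac (lexx b) ctb; rewrite ger0_norm.
- by rewrite mass_1Bg //; have := lambda_split ac cb; lra.
by rewrite le_eqVlt; apply/orP; left; apply/eqP; ring.
Qed.

Lemma Rintegral_tail_diff_le :
  `|\int[mu]_(t in `[a, b]) (f t * g t) - \int[mu]_(t in `[b - lambda, b]) f t|
    <= lambda ^+ 2 / 6 * `|df b|
       + (lambda ^+ 2 + (b - a - lambda) ^+ 2) / 3 * `|df (b - lambda)|
       + (b - a - lambda) ^+ 2 / 6 * `|df a|.
Proof.
have l0 := lambda_ge0; have lba := lambda_le.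
have ad : a <= b - lambda by lra.
have db : b - lambda <= b by lra.
rewrite (Rintegral_itv_split ad db (integrable_fg (lexx a) (lexx b))).
rewrite -addrA -[X in _ + X]opprB -Rintegral_f1Bg //.
apply: le_trans (weighted_split_diff_le fint fac mN N0 fdf cvx ad db
  (integrable_g (lexx a) db) (integrable_1Bg ad (lexx b)) _ _ _) _.
- by move=> t atd; have /andP[g0 g1] := g_bound (lexx a) db atd; rewrite ger0_norm.
- move=> t dtb; have /andP[g0 g1] := g_bound ad (lexx b) dtb.
  by rewrite ger0_norm; lra.
- by rewrite mass_1Bg //; have := lambda_split ad db; lra.
by rewrite le_eqVlt; apply/orP; left; apply/eqP; ring.
Qed.

End WeightedMean.

Unset Implicit Arguments.

Theorem corollary2p3 (R : realType) (a b : R) (f g df : R -> R) :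
  0 <= a -> a < b ->
  (@lebesgue_measure R).-integrable `[a, b] (EFin \o f) ->
  (@lebesgue_measure R).-integrable `[a, b] (EFin \o g) ->
  (forall t, a <= t <= b -> 0 <= g t <= 1) ->
  (* df is (a version of) f' : f is differentiable with derivative df x at a.e. x of [a,b] *)
  {ae (@lebesgue_measure R),
     forall x, a <= x <= b -> is_derive x 1 f (df x)} ->
  (* the integral of g f' over [a,b] exists *)
  (@lebesgue_measure R).-integrable `[a, b]
      (EFin \o (fun t => g t * df t)) ->
  abs_continuous_on a b f ->
  convex_on a b (fun t => `|df t|) ->
  let lambda := \int[@lebesgue_measure R]_(t in `[a, b]) g t in
  `| \int[@lebesgue_measure R]_(t in `[a, a + lambda]) f t
     - \int[@lebesgue_measure R]_(t in `[a, b]) (f t * g t) |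
    <= lambda ^+ 2 / 6 * `|df a|
       + (lambda ^+ 2 + (b - a - lambda) ^+ 2) / 3 * `|df (a + lambda)|
       + (b - a - lambda) ^+ 2 / 6 * `|df b|
  /\
  `| \int[@lebesgue_measure R]_(t in `[a, b]) (f t * g t)
     - \int[@lebesgue_measure R]_(t in `[b - lambda, b]) f t |
    <= lambda ^+ 2 / 6 * `|df b|
       + (lambda ^+ 2 + (b - a - lambda) ^+ 2) / 3 * `|df (b - lambda)|
       + (b - a - lambda) ^+ 2 / 6 * `|df a|.
Proof.
move=> _ ab fint gint g01 [N [mN N0 notderN]] _ fac cvx lambda.
have fdf s : a <= s <= b -> ~ N s -> is_derive s 1 f (df s).
  by move=> sab Ns; apply: contrapT => nd; apply: Ns; apply: notderN => /(_ sab).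
split.
- exact: Rintegral_head_diff_le (ltW ab) fint fac gint g01 mN N0 fdf cvx.
- exact: Rintegral_tail_diff_le (ltW ab) fint fac gint g01 mN N0 fdf cvx.
Qed.
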